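(* Let $\mathcal{H}$ be a family of simple graphs with $\rho:=\min\{\chi(H):H\in\mathcal{H}\}\geq 3$. Then \[\mathcal{E}_\mathcal{H}(k)=\Bigl(1+\frac{1}{\rho-2}+o(1)\Bigr)k,\] where $o(1)\to 0$ as $k\to\infty$.
   Context: All graphs are finite, simple and 2-uniform, without isolated vertices. For a graph $G$ and a family of graphs $\mathcal{H}$, $\operatorname{ex}(G,\mathcal{H})$ is the maximum number of edges of a subgraph $F\subseteq G$ that contains no member of $\mathcal{H}$ as a subgraph. For a positive integer $k$, $\mathcal{E}_\mathcal{H}(k):=\sup\{e(G): G \text{ a simple graph with } \operatorname{ex}(G,\mathcal{H})<k\}$. $\chi$ denotes chromatic number. *)

From HB Require Import structures.
From mathcomp Require Import all_boot all_order all_algebra.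
From mathcomp Require Import boolp.
Set Implicit Arguments. Unset Strict Implicit. Unset Printing Implicit Defensive.
Import Order.TTheory GRing.Theory Num.Theory.

Record sgraph := SGraph {
  nv : nat;
  adj : rel 'I_nv;
  adj_sym : symmetric adj;
  adj_irr : irreflexive adj }.

Definition no_isolated (G : sgraph) : Prop :=
  forall x : 'I_(nv G), exists y, adj x y.

(* edge set: unordered edges encoded as ordered pairs (x, y) with x < y *)
Definition edges (G : sgraph) : {set 'I_(nv G) * 'I_(nv G)} :=
  [set p : 'I_(nv G) * 'I_(nv G) | (val p.1 < val p.2)%N && adj p.1 p.2].

Definition nedges (G : sgraph) : nat := #|edges G|.

Definition fadj n (F : {set 'I_n * 'I_n}) (x y : 'I_n) : bool :=
  ((x, y) \in F) || ((y, x) \in F).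

Definition contains n (F : {set 'I_n * 'I_n}) (H : sgraph) : Prop :=
  exists f : 'I_(nv H) -> 'I_n,
    injective f /\ forall x y, adj x y -> fadj F (f x) (f y).

Definition Hfree n (F : {set 'I_n * 'I_n}) (fam : sgraph -> Prop) : Prop :=
  forall H, fam H -> ~ contains F H.

Definition ex (G : sgraph) (fam : sgraph -> Prop) : nat :=
  \max_(F : {set 'I_(nv G) * 'I_(nv G)} |
          (F \subset edges G) && `[< Hfree F fam >]) #|F|.

Definition colorable (G : sgraph) (k : nat) : Prop :=
  exists c : 'I_(nv G) -> 'I_k, forall x y, adj x y -> c x != c y.

Definition is_chi (G : sgraph) (k : nat) : Prop :=
  colorable G k /\ forall j, colorable G j -> (k <= j)%N.

Definition is_min_chi (fam : sgraph -> Prop) (rho : nat) : Prop :=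
  (exists H, fam H /\ is_chi H rho) /\
  (forall H k, fam H -> is_chi H k -> (rho <= k)%N).

From mathcomp Require Import all_boot all_order all_algebra.
From mathcomp Require Import zify ring.
From mathcomp Require Import boolp.
Import Order.TTheory GRing.Theory Num.Theory.
Set Implicit Arguments. Unset Strict Implicit. Unset Printing Implicit Defensive.

(* Upper bound: colour [G] with [rho - 1] colours so that as few edges as
   possible are monochromatic; at most a [1/(rho - 1)] fraction are, and the
   remaining [(rho - 1)]-partite subgraph contains no member of [fam], so
   [ex G fam >= (rho - 2)/(rho - 1) e(G)].
   Lower bound: with [r = rho - 1] and [m] large, take [K_N] with [N] maximal
   such that a [(1 - 1/r + 3/m)] fraction of its edges is at most [k].  A
   subgraph with [k] edges is then denser than that, so it has a subset of
   minimum degree [(1 - 1/r + 1/m)|S|], and the Erdos-Stone argument finds in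
   it a complete [rho]-partite graph with parts of the size of a
   [rho]-chromatic member of [fam]; hence [ex K_N fam < k], while [e(K_N)] is
   about [r/(r - 1) k = (1 + 1/(rho - 2)) k]. *)

Section DegreesInSet.

Variables (V : finType) (e : rel V).

Definition deg_in (S : {set V}) (x : V) : nat := \sum_(y in S) e x y.

Definition deg_sum (S : {set V}) : nat := \sum_(x in S) deg_in S x.

(* [min_degree_dense m r S]: every vertex of [S] has at least
   [(1 - 1/r + 1/m) |S|] neighbours in [S]. *)
Definition min_degree_dense (m r : nat) (S : {set V}) : Prop :=
  forall x, x \in S -> (m * r + r) * #|S| <= m * r * deg_in S x + m * #|S|.

Lemma deg_in_le_card (S : {set V}) x : deg_in S x <= #|S|.
Proof. by rewrite /deg_in -sum1_card; apply: leq_sum => y _; case: (e x y). Qed.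

Lemma card_nbhd_in (S : {set V}) x : #|[set y in S | e x y]| = deg_in S x.
Proof.
rewrite /deg_in -sum1_card big_mkcond [RHS]big_mkcond /=.
by apply: eq_bigr => y _; rewrite inE; case: (y \in S); case: (e x y).
Qed.

Lemma deg_inD1 (S : {set V}) x z :
  x \in S -> deg_in S z = e z x + deg_in (S :\ x) z.
Proof.
move=> xS; rewrite /deg_in (bigD1 x) //=; congr (_ + _).
by apply: eq_bigl => y; rewrite in_setD1 andbC.
Qed.

Lemma deg_inU (S W : {set V}) x : deg_in S x <= deg_in (S :\: W) x + #|W|.
Proof.
rewrite /deg_in (big_setID W) /= addnC leq_add2l.
apply: leq_trans (deg_in_le_card _ x) _.
by apply: subset_leq_card; apply: subsetIr.
Qed.

Hypotheses (e_sym : symmetric e) (e_irr : irreflexive e).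

Lemma deg_sumD1 (S : {set V}) x :
  x \in S -> deg_sum S = deg_sum (S :\ x) + 2 * deg_in S x.
Proof.
move=> xS; rewrite /deg_sum (bigD1 x) //=.
have -> : \sum_(i in S | i != x) deg_in S i =
          \sum_(i in S :\ x) (e x i + deg_in (S :\ x) i).
  rewrite [RHS](eq_bigl (fun i => (i \in S) && (i != x))); last first.
    by move=> i; rewrite in_setD1 andbC.
  by apply: eq_bigr => i _; rewrite (deg_inD1 i xS) e_sym.
rewrite big_split /=.
have -> : \sum_(i in S :\ x) e x i = deg_in S x by rewrite (deg_inD1 x xS) e_irr.
lia.
Qed.

Lemma deg_in_le (S : {set V}) x : x \in S -> deg_in S x <= #|S| - 1.
Proof.
move=> xS; rewrite (deg_inD1 x xS) e_irr add0n (cardsD1 x S) xS add1n subn1.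
exact: deg_in_le_card.
Qed.

Lemma deg_sum_le (S : {set V}) : deg_sum S <= #|S| * (#|S| - 1).
Proof. by rewrite /deg_sum -sum_nat_const; apply: leq_sum => x; apply: deg_in_le. Qed.

End DegreesInSet.

Section DenseSubset.

Variables (V : finType) (e : rel V) (m r : nat).
Hypotheses (e_sym : symmetric e) (e_irr : irreflexive e) (r_gt0 : 0 < r).

Let pairs (S : {set V}) := #|S| * (#|S| - 1).

(* Deleting [x] from [S] changes the potential by
   [2 (c (|S| - 1) - m r deg_S x)], so a maximiser has minimum degree about
   [(1 - 1/r + 2/m) |S|]; comparing it with [setT] shows that it is large. *)
Let c := m * r - m + 2 * r.
Let potential (S : {set V}) := m * r * deg_sum e S + c * (pairs setT - pairs S).

Lemma pairs_le_setT (S : {set V}) : pairs S <= pairs setT.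
Proof.
have h : #|S| <= #|[set: V]| by apply: subset_leq_card; apply: subsetT.
by apply: leq_mul => //; apply: leq_sub2r.
Qed.

Lemma potential_max_large (S : {set V}) :
  (m * r - m + 3 * r) * pairs setT <= m * r * deg_sum e setT ->
  potential setT <= potential S -> pairs setT <= m * pairs S.
Proof.
rewrite /potential subnn muln0 addn0 => hE hS.
have := leq_trans hE hS; have := deg_sum_le e_irr S; have := pairs_le_setT S.
rewrite /c -/(pairs S); set a := pairs setT; set b := pairs S.
move=> hb hES h.
have {}h : (m * r - m + 3 * r) * a <= m * r * b + (m * r - m + 2 * r) * (a - b).
  by apply: leq_trans h _; rewrite leq_add2r leq_mul2l hES orbT.
have hm : m <= m * r by rewrite leq_pmulr.
have hba : (m * r - m + 2 * r) * b <= (m * r - m + 2 * r) * a by rewrite leq_mul2l hb orbT.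
have hra : a <= r * a by rewrite leq_pmull.
have hmb : m * b <= m * r * b by rewrite leq_mul2r hm orbT.
have hma : m * a <= m * r * a by rewrite leq_mul2r hm orbT.
rewrite mulnBr !mulnDl !mulnBl in h hba; lia.
Qed.

Lemma potential_max_min_degree (S : {set V}) x :
  x \in S -> m + 2 <= #|S| ->
  potential (S :\ x) <= potential S ->
  (m * r + r) * #|S| <= m * r * deg_in e S x + m * #|S|.
Proof.
move=> xS; have hSx : #|S| = #|S :\ x|.+1 by rewrite (cardsD1 x S) xS.
have ha := pairs_le_setT S; rewrite /potential; set a := pairs setT in ha *.
rewrite (deg_sumD1 e_sym e_irr xS) /pairs hSx subn1 /= in ha *.
set n := #|S :\ x| in ha *; set d := deg_in e S x.
rewrite /c => S_big.
have hmr : m <= m * r by rewrite leq_pmulr.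
have en : n.+1 * n = n * (n - 1) + 2 * n by case: (n) => [|k] //; rewrite subn1 /=; nia.
rewrite en in ha *; move=> h.
have {}h : (m * r - m + 2 * r) * n <= m * r * d.
  have ea : a - n * (n - 1) = a - (n * (n - 1) + 2 * n) + 2 * n by lia.
  rewrite ea mulnDr in h; lia.
have hmn : m * n <= m * r * n by rewrite leq_mul2r hmr orbT.
have hrn : r * (m + 1) <= r * n by rewrite leq_mul2l; lia.
rewrite mulnDl mulnBl in h; rewrite mulnDr in hrn; rewrite !mulnS; lia.
Qed.

Lemma min_degree_dense_subset (N1 : nat) :
  m + 2 <= N1 -> m * (N1 * (N1 - 1)) < #|V| * (#|V| - 1) ->
  (m * r - m + 3 * r) * (#|V| * (#|V| - 1)) <= m * r * deg_sum e setT ->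
  exists S : {set V}, N1 < #|S| /\ min_degree_dense e m r S.
Proof.
rewrite -cardsT -/(pairs setT) => hN1 hV hE.
have [S _ Smax] := @arg_maxnP _ setT xpredT potential erefl.
have large := potential_max_large hE (Smax setT erefl).
have S_big : N1 < #|S|.
  rewrite ltnNge; apply/negP => hS.
  have : pairs S <= N1 * (N1 - 1) by apply: leq_mul => //; apply: leq_sub2r.
  rewrite -(leq_pmul2l (m := m)); last by lia.
  by move/(leq_trans large); rewrite leqNgt hV.
exists S; split => // x xS.
by apply: potential_max_min_degree => //; [lia | apply: Smax].
Qed.

End DenseSubset.

Lemma card_bigcup_le (V I : finType) (F : I -> {set V}) :
  #|\bigcup_(i : I) F i| <= \sum_(i : I) #|F i|.
Proof.
apply: (big_ind2 (fun (A : {set V}) n => #|A| <= n)) => //; first by rewrite cards0.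
move=> A1 n1 A2 n2 h1 h2; apply: leq_trans (leq_card_setU A1 A2) _.
exact: leq_add.
Qed.

Lemma pigeonhole_powerset (V : finType) (X W : {set V}) (p : V -> {set V}) t :
  {in X, forall u, p u \subset W} -> (t - 1) * 2 ^ #|W| < #|X| ->
  exists P, t <= #|[set u in X | p u == P]|.
Proof.
move=> hp hX; apply/existsP/negbNE/negP; rewrite negb_exists => /forallP small.
move: hX; apply/negP; rewrite -leqNgt.
rewrite -sum1_card (partition_big p (fun P => P \in powerset W)); last first.
  by move=> u uX; rewrite powersetE hp.
rewrite -card_powerset mulnC -sum_nat_const; apply: leq_sum => P _.
rewrite sum1dep_card; apply: leq_trans (_ : _ <= #|[set u in X | p u == P]|) _.
  by apply: subset_leq_card; apply/subsetP => u; rewrite !inE.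
by have := small P; rewrite -ltnNge; lia.
Qed.

Section CompleteParts.

Variables (V : finType) (e : rel V).

Definition complete_parts s (S : {set V}) (t : nat) (A : 'I_s -> {set V}) : Prop :=
  (forall i, A i \subset S /\ t <= #|A i|) /\
  (forall i j, i != j -> forall x y, x \in A i -> y \in A j -> e x y).

Definition extend_parts s (A : 'I_s -> {set V}) (Y : {set V}) (i : 'I_s.+1) :=
  if unlift ord_max i is Some j then A j else Y.

Lemma complete_parts_sub s S t t' (A B : 'I_s -> {set V}) :
  complete_parts S t A -> (forall i, B i \subset A i /\ t' <= #|B i|) ->
  complete_parts S t' B.
Proof.
move=> [hA hK] hB; split.
  by move=> i; have [BA ->] := hB i; rewrite (subset_trans BA) ?(proj1 (hA i)).
move=> i j ij x y xB yB.
exact: hK ij x y (subsetP (proj1 (hB i)) x xB) (subsetP (proj1 (hB j)) y yB).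
Qed.

Lemma complete_parts_trim s S t (A : 'I_s -> {set V}) :
  complete_parts S t A ->
  exists B : 'I_s -> {set V}, complete_parts S t B /\ forall i, #|B i| = t.
Proof.
move=> hA; have small_sub i : exists B : {set V}, B \subset A i /\ #|B| = t.
  have /card_geqP [s' [us s'A sA]] := proj2 (proj1 hA i).
  exists [set x in s']; rewrite cardsE (card_uniqP us) s'A; split=> //.
  by apply/subsetP => x; rewrite inE => /sA.
have [B hB] := fin_all_exists small_sub.
exists B; split=> [|i]; last by rewrite (proj2 (hB i)).
apply: complete_parts_sub hA _ => i.
by rewrite (proj2 (hB i)); split; first exact: (proj1 (hB i)).
Qed.

Hypothesis e_sym : symmetric e.

Lemma complete_parts_extend s S t (A : 'I_s -> {set V}) (Y : {set V}) :
  complete_parts S t A -> Y \subset S -> t <= #|Y| ->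
  (forall i x y, x \in A i -> y \in Y -> e x y) ->
  complete_parts S t (extend_parts A Y).
Proof.
move=> [hA hK] YS hY hAY; split=> [i | i j].
  by rewrite /extend_parts; case: (unlift ord_max i).
rewrite /extend_parts.
case: (unliftP ord_max i) => [i'|] ->; rewrite ?liftK ?unlift_none;
  case: (unliftP ord_max j) => [j'|] ->; rewrite ?liftK ?unlift_none //.
- by rewrite (inj_eq lift_inj); apply: hK.
- by move=> _ x y; apply: hAY.
- by move=> _ x y xY yA; rewrite e_sym; apply: hAY yA xY.
- by rewrite eqxx.
Qed.

End CompleteParts.

Lemma min_degree_dense_weaken (V : finType) (e : rel V) m r (S : {set V}) :
  min_degree_dense e m r.+1 S -> min_degree_dense e m r S.
Proof.
move=> dense x xS; have := dense x xS; set n := #|S|; set d := deg_in e S x => h.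
have hr : r * ((m * r.+1 + r.+1) * n) <= r * (m * r.+1 * d + m * n).
  by rewrite leq_mul2l h orbT.
by rewrite -(leq_pmul2l (ltn0Sn r)); lia.
Qed.

Section RichVertices.

Variables (V : finType) (e : rel V) (m r t T : nat) (S : {set V}).
Variable A : 'I_r.+1 -> {set V}.
Hypotheses (A_sub : forall i, A i \subset S) (A_card : forall i, #|A i| = T).

Let W := \bigcup_i A i.
Let U := S :\: W.
Let rich := [set u in U | [forall i, t <= deg_in e (A i) u]].
Let cross := \sum_i \sum_(w in A i) deg_in e U w.

Lemma card_parts_union : #|W| <= r.+1 * T.
Proof.
apply: leq_trans (card_bigcup_le _) _.
by rewrite (eq_bigr (fun _ => T)) ?sum_nat_const ?card_ord // => i _; rewrite A_card.
Qed.

Lemma cross_degree_lower : min_degree_dense e m r.+1 S ->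
  r.+1 * T * ((m * r.+1 + r.+1) * #|S|) <=
  m * r.+1 * cross + r.+1 * T * (m * r.+1 * (r.+1 * T) + m * #|S|).
Proof.
set s := r.+1; set n := #|S| => dense.
have hw i w : w \in A i ->
    (m * s + s) * n <= m * s * deg_in e U w + (m * s * (s * T) + m * n).
  move=> wA; have := dense w (subsetP (A_sub i) w wA); rewrite -/n => hd.
  have : m * s * deg_in e S w <= m * s * (deg_in e U w + s * T).
    rewrite leq_mul2l; apply/orP; right.
    exact: leq_trans (deg_inU e S W w) (leq_add (leqnn _) card_parts_union).
  rewrite mulnDr; lia.
have : \sum_i \sum_(w in A i) ((m * s + s) * n) <=
    \sum_i \sum_(w in A i) (m * s * deg_in e U w + (m * s * (s * T) + m * n)).
  by apply: leq_sum => i _; apply: leq_sum => w; apply: hw.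
rewrite (eq_bigr (fun _ => T * ((m * s + s) * n))); last first.
  by move=> i _; rewrite sum_nat_const A_card.
rewrite sum_nat_const card_ord.
rewrite (eq_bigr (fun i => m * s * (\sum_(w in A i) deg_in e U w) +
                           T * (m * s * (s * T) + m * n))); last first.
  by move=> i _; rewrite big_split /= -big_distrr sum_nat_const A_card.
by rewrite big_split /= -big_distrr sum_nat_const card_ord !mulnA.
Qed.

Lemma cross_degree_upper : symmetric e -> cross <= #|rich| * (r.+1 * T) + #|S| * (r * T + t).
Proof.
move=> e_sym.
have -> : cross = \sum_(u in U) \sum_i deg_in e (A i) u.
  rewrite /cross (eq_bigr (fun i => \sum_(u in U) \sum_(w in A i) e u w)); last first.
    move=> i _; rewrite exchange_big.
    by apply: eq_bigr => w _; apply: eq_bigr => u _; rewrite e_sym.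
  by rewrite exchange_big.
have part_le i u : deg_in e (A i) u <= T by rewrite -(A_card i) deg_in_le_card.
have hu u : u \in U -> \sum_i deg_in e (A i) u <= (u \in rich) * (r.+1 * T) + (r * T + t).
  move=> uU; case: (boolP [forall i, t <= deg_in e (A i) u]) => [urich | /forallPn [j]].
    rewrite inE uU urich mul1n; apply: leq_trans (leq_addr _ _).
    apply: leq_trans (_ : _ <= \sum_(i < r.+1) T) _; first exact: leq_sum.
    by rewrite sum_nat_const card_ord.
  rewrite -ltnNge => hj; rewrite (bigD1 j) //=; apply: leq_trans (leq_addl _ _).
  rewrite addnC; apply: leq_add; last exact: ltnW.
  apply: leq_trans (_ : _ <= \sum_(i < r.+1 | i != j) T) _; first exact: leq_sum.
  by rewrite sum_nat_const cardC1 card_ord.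
apply: leq_trans (_ : _ <= \sum_(u in U) _) _; first exact: leq_sum hu.
rewrite big_split /= sum_nat_const -big_distrl /=.
apply: leq_add; last by rewrite leq_mul2r subset_leq_card ?subsetDl ?orbT.
rewrite leq_mul2r -sum1_card big_mkcond /= [in X in _ <= X]big_mkcond /=.
by rewrite leq_sum ?orbT // => u _; rewrite !inE; case: (u \in S) => //; case: (u \in W).
Qed.

Lemma many_rich_vertices : symmetric e -> 0 < m -> 0 < t -> T = 2 * m * t ->
  min_degree_dense e m r.+1 S -> #|S| <= 2 * m * #|rich| + 4 * (m * m * r.+1 * t).
Proof.
move=> e_sym m_gt0 t_gt0 defT dense.
have lo := cross_degree_lower dense; have up := cross_degree_upper e_sym.
move: lo up; set n := #|S|; set g := #|rich|; move: cross => L.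
move Hs: r.+1 => s lo up; have s_gt0 : 0 < s by rewrite -Hs.
have up' : m * s * L <= m * s * (g * (s * T) + n * (r * T + t)).
  by rewrite leq_mul2l up orbT.
have es : m * s * (n * (r * T)) + s * T * (m * n) = s * T * (m * s * n).
  by rewrite -Hs !mulnS !mulSn; lia.
have hst : m * s * n * t <= s * s * (m * n * t).
  by have := leq_mul (leq_pmull s s_gt0) (leqnn (m * n * t)); lia.
have : s * s * (T * n) <= s * s * (m * g * T + m * n * t + m * s * T * T).
  by have := leq_trans lo (leq_add up' (leqnn _)); lia.
rewrite leq_pmul2l ?muln_gt0 ?s_gt0 // defT => h.
have : m * t * (2 * n) <= m * t * (2 * m * g + n + 4 * (m * m * s * t)) by lia.
by rewrite leq_pmul2l ?muln_gt0 ?m_gt0 ?t_gt0 //; lia.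
Qed.

End RichVertices.

(* Counting the edges between the [r + 1] parts of size [2 m t] and the rest
   of [S] shows that many outside vertices have [t] neighbours in every part;
   [t] of them have the same neighbourhood in the parts and form the new part. *)
Lemma complete_parts_step (V : finType) (e : rel V) m r t (S : {set V})
    (A : 'I_r.+1 -> {set V}) :
  symmetric e -> 0 < m -> 0 < t -> min_degree_dense e m r.+1 S ->
  complete_parts e S (2 * m * t) A ->
  2 * m * ((t - 1) * 2 ^ (r.+1 * (2 * m * t))) + 4 * (m * m * r.+1 * t) < #|S| ->
  exists B : 'I_r.+2 -> {set V}, complete_parts e S t B.
Proof.
move=> e_sym m_gt0 t_gt0 dense /complete_parts_trim [{}A [hA A_card]] hS.
have A_sub i : A i \subset S := proj1 (proj1 hA i).
set W := \bigcup_i A i.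
set rich := [set u in S :\: W | [forall i, t <= deg_in e (A i) u]].
have many : #|S| <= 2 * m * #|rich| + 4 * (m * m * r.+1 * t).
  exact: many_rich_vertices A_sub A_card e_sym m_gt0 t_gt0 erefl dense.
have hW : 2 ^ #|W| <= 2 ^ (r.+1 * (2 * m * t)).
  by rewrite leq_pexp2l // card_parts_union.
have many' : (t - 1) * 2 ^ #|W| < #|rich|.
  rewrite -(@ltn_pmul2l (2 * m)) ?muln_gt0 ?m_gt0 //.
  have := leq_mul (leqnn (2 * m)) (leq_mul (leqnn (t - 1)) hW); lia.
pose nbW u := [set y in W | e u y].
have nbW_sub : {in rich, forall u, nbW u \subset W}.
  by move=> u _; rewrite /nbW setIdE subsetIl.
have [P hP] := pigeonhole_powerset nbW_sub many'.
set Y := [set u in rich | nbW u == P] in hP.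
have [u0 u0Y] : exists u0, u0 \in Y by apply/card_gt0P; apply: leq_trans hP.
have Y_nbW y : y \in Y -> nbW y = nbW u0.
  by rewrite !inE => /andP [_ /eqP ->]; move: u0Y; rewrite inE => /andP [_ /eqP ->].
have u0_rich : [forall i, t <= deg_in e (A i) u0].
  by move: u0Y; rewrite !inE => /andP [/andP [_ ->]].
pose B j := [set y in A j | e u0 y].
exists (extend_parts B Y); apply: complete_parts_extend => //.
- apply: complete_parts_sub hA _ => j; split; first by rewrite /B setIdE subsetIl.
  by rewrite card_nbhd_in (forallP u0_rich j).
- apply/subsetP => y; rewrite !inE => /andP [/andP [/andP [_ yS] _] _]; exact: yS.
- move=> j x y; rewrite inE => /andP [xA ex] yY.
  have : x \in nbW y by rewrite Y_nbW // inE ex (subsetP (bigcup_sup j isT)).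
  by rewrite inE e_sym => /andP [].
Qed.

Lemma erdos_stone m r : 0 < m -> forall t, exists N, forall (V : finType) (e : rel V),
  symmetric e -> forall S : {set V}, N <= #|S| -> min_degree_dense e m r S ->
  exists A : 'I_r.+1 -> {set V}, complete_parts e S t A.
Proof.
move=> m_gt0; elim: r => [|r IH] t.
  exists t => V e _ S hS _; exists (fun _ => S); split=> [_ | i j].
    by rewrite subxx.
  by rewrite !ord1 eqxx.
case: t => [|t].
  exists 0 => V e _ S _ _; exists (fun _ => set0); split=> [_ | i j _ x y].
    by rewrite sub0set.
  by rewrite inE.
have [N HN] := IH (2 * m * t.+1).
exists (N + 2 * m * (t * 2 ^ (r.+1 * (2 * m * t.+1))) + 4 * (m * m * r.+1 * t.+1)).+1.
move=> V e e_sym S hS dense.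
have [|A hA] := HN V e e_sym S _ (min_degree_dense_weaken dense); first lia.
by apply: complete_parts_step hA _ => //; rewrite subn1 /=; lia.
Qed.

Lemma card_set_pred (T : finType) (P : pred T) : #|[set x | P x]| = \sum_x P x.
Proof.
rewrite -sum1_card big_mkcond [RHS]big_mkcond /=.
by apply: eq_bigr => x _; rewrite inE; case: (P x).
Qed.

Lemma sum_sym_rel n (R : rel 'I_n) : symmetric R -> irreflexive R ->
  \sum_x \sum_y R x y = 2 * #|[set p : 'I_n * 'I_n | (val p.1 < val p.2) && R p.1 p.2]|.
Proof.
move=> R_sym R_irr; rewrite pair_big /= card_set_pred.
have -> : \sum_(p : 'I_n * 'I_n) R p.1 p.2 =
    \sum_(p : 'I_n * 'I_n) ((val p.1 < val p.2) && R p.1 p.2 : nat) +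
    \sum_(p : 'I_n * 'I_n) ((val p.2 < val p.1) && R p.1 p.2 : nat).
  rewrite -big_split /=; apply: eq_bigr => [[x y]] _ /=.
  case: (ltngtP (val x) (val y)) => [||/val_inj ->] //=; rewrite ?addn0 //.
  by rewrite R_irr.
rewrite mul2n -addnn; congr (_ + _).
rewrite (reindex_inj (h := fun p : 'I_n * 'I_n => (p.2, p.1))) /=; last first.
  by move=> [a b] [c d] /= [-> ->].
by apply: eq_bigr => [[x y]] _ /=; rewrite R_sym.
Qed.

Lemma sum_adj (G : sgraph) :
  \sum_(x : 'I_(nv G)) \sum_(y : 'I_(nv G)) (adj x y : nat) = 2 * nedges G.
Proof. exact: sum_sym_rel (@adj_sym G) (@adj_irr G). Qed.

Lemma complete_rel_sym N : symmetric (fun x y : 'I_N => x != y).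
Proof. by move=> x y; rewrite eq_sym. Qed.

Lemma complete_rel_irr N : irreflexive (fun x y : 'I_N => x != y).
Proof. by move=> x; rewrite eqxx. Qed.

Definition complete_graph (N : nat) : sgraph :=
  SGraph (@complete_rel_sym N) (@complete_rel_irr N).

Lemma nedges_complete_graph N : 2 * nedges (complete_graph N) = N * (N - 1).
Proof.
rewrite -sum_adj /= (eq_bigr (fun _ => N - 1)) ?sum_nat_const ?card_ord // => x _.
rewrite -card_set_pred.
have -> : [set y | x != y] = [set~ x] by apply/setP => y; rewrite !inE eq_sym.
by rewrite cardsC1 card_ord subn1.
Qed.

Lemma complete_graph_no_isolated N : 1 < N -> no_isolated (complete_graph N).
Proof.
move=> N_gt1 x; have N_gt0 := ltnW N_gt1.
case: (eqVneq x (Ordinal N_gt0)) => [-> | x0]; last by exists (Ordinal N_gt0).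
by exists (Ordinal N_gt1).
Qed.

Section SpanningSubgraph.

Variables (n : nat) (F : {set 'I_n * 'I_n}).
Hypothesis F_ordered : F \subset [set p : 'I_n * 'I_n | val p.1 < val p.2].

Lemma fadj_sym : symmetric (fadj F).
Proof. by move=> x y; rewrite /fadj orbC. Qed.

Lemma fadj_irr : irreflexive (fadj F).
Proof.
by move=> x; rewrite /fadj orbb; apply/negP => /(subsetP F_ordered); rewrite inE ltnn.
Qed.

Lemma deg_sum_fadj : deg_sum (fadj F) setT = 2 * #|F|.
Proof.
rewrite /deg_sum /deg_in.
under eq_bigl do rewrite inE; under eq_bigr do under eq_bigl do rewrite inE.
rewrite (sum_sym_rel fadj_sym fadj_irr); congr (_ * _); apply: eq_card => -[x y].
rewrite !inE /fadj /=; case xyF: ((x, y) \in F).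
  by have := subsetP F_ordered _ xyF; rewrite inE => ->.
case yxF: ((y, x) \in F); last by rewrite andbF.
have := subsetP F_ordered _ yxF; rewrite inE andbT /=.
by move=> /ltnW; rewrite leqNgt => /negbTE.
Qed.

Lemma contains_of_complete_parts (H : sgraph) q (c : 'I_(nv H) -> 'I_q)
    (S : {set 'I_n}) (A : 'I_q -> {set 'I_n}) :
  (forall x y, adj x y -> c x != c y) ->
  complete_parts (fadj F) S (nv H) A -> contains F H.
Proof.
move=> c_proper [hA hK].
have c_fits (u : 'I_(nv H)) : u < #|A (c u)|.
  exact: leq_trans (ltn_ord u) (proj2 (hA (c u))).
pose f u := enum_val (Ordinal (c_fits u)).
have fA u : f u \in A (c u) := enum_valP _.
have f_nth u y : f u = nth y (enum (A (c u))) u.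
  by rewrite /f /enum_val (set_nth_default y) // -cardE.
exists f; split=> [u w fuw | u w uw]; last first.
  exact: hK _ _ (c_proper _ _ uw) _ _ (fA u) (fA w).
case: (eqVneq (c u) (c w)) => cuw; last first.
  by have := hK _ _ cuw _ _ (fA u) (fA w); rewrite fuw fadj_irr.
have hu : u < size (enum (A (c w))) by rewrite -cardE -cuw c_fits.
have hw : w < size (enum (A (c w))) by rewrite -cardE c_fits.
apply: val_inj; apply/eqP; rewrite -(nth_uniq (f u) hu hw (enum_uniq _)).
by rewrite -[X in nth _ (enum (A X)) u]cuw -!f_nth fuw.
Qed.

End SpanningSubgraph.

Section MaxCut.

Variables (G : sgraph) (q : nat).

Definition mono_pairs (c : 'I_(nv G) -> 'I_q) : nat :=
  \sum_z \sum_y (adj z y && (c z == c y)).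

Let mono_deg (c : 'I_(nv G) -> 'I_q) x j := \sum_y (adj x y && (c y == j)).

Lemma mono_pairs_split c x :
  mono_pairs c = mono_deg c x (c x) + mono_deg c x (c x) +
    \sum_(z | z != x) \sum_(y | y != x) (adj z y && (c z == c y)).
Proof.
rewrite /mono_pairs (bigD1 x) //= -addnA; congr (_ + _).
  by apply: eq_bigr => y _; rewrite eq_sym.
rewrite (eq_bigr (fun z => (adj z x && (c z == c x)) +
    \sum_(y | y != x) (adj z y && (c z == c y)))); last by move=> z _; rewrite (bigD1 x).
rewrite big_split /=; congr (_ + _).
rewrite [RHS](bigD1 x) //= adj_irr /= add0n.
by apply: eq_bigr => z _; rewrite adj_sym eq_sym.
Qed.

Lemma mono_pairs_recolor c x j :
  mono_pairs (fun z => if z == x then j else c z) + 2 * mono_deg c x (c x) =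
  mono_pairs c + 2 * mono_deg c x j.
Proof.
set c' := fun z => _.
have deg' : mono_deg c' x (c' x) = mono_deg c x j.
  apply: eq_bigr => y _; rewrite /c' eqxx.
  by case: (eqVneq y x) => [->|]; first by rewrite adj_irr.
have rest : \sum_(z | z != x) \sum_(y | y != x) (adj z y && (c' z == c' y)) =
            \sum_(z | z != x) \sum_(y | y != x) (adj z y && (c z == c y)).
  apply: eq_bigr => z zx; apply: eq_bigr => y yx.
  by rewrite /c' (negbTE zx) (negbTE yx).
rewrite (mono_pairs_split c' x) (mono_pairs_split c x) deg' rest; lia.
Qed.

(* A colouring minimising the monochromatic pairs cannot be improved by
   recolouring one vertex, so each vertex has at most a [1/q] fraction of its
   neighbours in its own colour class. *)
Lemma few_monochromatic_edges : 0 < q ->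
  exists c : 'I_(nv G) -> 'I_q,
    q * #|[set p in edges G | c p.1 == c p.2]| <= nedges G.
Proof.
move=> q_gt0.
pose c0 : {ffun 'I_(nv G) -> 'I_q} := [ffun _ => Ordinal q_gt0].
have [c _ c_min] := @arg_minnP _ c0 xpredT (fun d : {ffun _ -> _} => mono_pairs d) erefl.
exists c.
have local x j : mono_deg c x (c x) <= mono_deg c x j.
  pose c' : {ffun 'I_(nv G) -> 'I_q} := [ffun z => if z == x then j else c z].
  have := c_min c' erefl.
  have -> : mono_pairs c' = mono_pairs (fun z => if z == x then j else c z).
    by apply: eq_bigr => z _; apply: eq_bigr => y _; rewrite !ffunE.
  by rewrite -(leq_add2r (2 * mono_deg c x (c x))) mono_pairs_recolor leq_add2l leq_pmul2l.
have deg_split x : \sum_y (adj x y : nat) = \sum_(j < q) mono_deg c x j.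
  rewrite exchange_big /=; apply: eq_bigr => y _.
  rewrite (bigD1 (c y)) //= eqxx andbT big1 ?addn0 // => k ck.
  by rewrite eq_sym (negbTE ck) andbF.
have mono_sum : \sum_x mono_deg c x (c x) = 2 * #|[set p in edges G | c p.1 == c p.2]|.
  have c_sym : symmetric (fun x y : 'I_(nv G) => adj x y && (c y == c x)).
    by move=> x y; rewrite adj_sym eq_sym.
  have c_irr : irreflexive (fun x y : 'I_(nv G) => adj x y && (c y == c x)).
    by move=> x; rewrite adj_irr.
  rewrite (sum_sym_rel c_sym c_irr); congr (_ * _); apply: eq_card => p.
  by rewrite !inE andbA [c p.2 == _]eq_sym.
rewrite -(leq_pmul2l (isT : 0 < 2)) mulnCA -mono_sum -sum_adj big_distrr /=.
apply: leq_sum => x _; rewrite deg_split -{1}(card_ord q) -sum_nat_const.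
by apply: leq_sum => j _; apply: local.
Qed.

End MaxCut.

Lemma min_chi_le_colorable fam rho (H : sgraph) j :
  is_min_chi fam rho -> fam H -> colorable H j -> rho <= j.
Proof.
move=> [_ chi_min] famH colj.
have ex_col : exists j, `[< colorable H j >] by exists j; apply/asboolP.
have [j0 /asboolP colj0 j0_min] := ex_minnP ex_col.
apply: leq_trans (j0_min j (asboolT colj)).
by apply: chi_min famH _; split=> // j' colj'; apply: j0_min; apply/asboolP.
Qed.

Lemma nedges_le_ex fam rho (G : sgraph) : is_min_chi fam rho -> 2 < rho ->
  (rho - 2) * nedges G <= (rho - 1) * ex G fam.
Proof.
move=> chi_min rho_gt2.
have [c c_mono] : exists c : 'I_(nv G) -> 'I_(rho - 1),
    (rho - 1) * #|[set p in edges G | c p.1 == c p.2]| <= nedges G.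
  by apply: few_monochromatic_edges; lia.
pose F := [set p in edges G | c p.1 != c p.2].
have F_split : #|F| + #|[set p in edges G | c p.1 == c p.2]| = nedges G.
  rewrite /nedges -(cardsID [set p | c p.1 == c p.2] (edges G)) addnC.
  by congr (_ + _); apply: eq_card => p; rewrite !inE andbC.
have F_free : Hfree F fam.
  move=> H famH [f [f_inj f_adj]].
  suff /(min_chi_le_colorable chi_min famH) : colorable H (rho - 1) by lia.
  exists (fun u => c (f u)) => u w uw.
  by move: (f_adj u w uw); rewrite /fadj !inE /= => /orP [] /andP [_]; rewrite // eq_sym.
have F_ex : #|F| <= ex G fam.
  apply: (leq_bigmax_cond F); apply/andP; split; last exact/asboolP.
  by apply/subsetP => p; rewrite inE => /andP [].
have := leq_mul (leqnn (rho - 1)) F_ex.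
have -> : rho - 2 = (rho - 1) - 1 by lia.
rewrite mulnBl mul1n -F_split mulnDr; lia.
Qed.

Lemma ex_complete_graph_lt fam (H : sgraph) r (c : 'I_(nv H) -> 'I_r.+1) m :
  fam H -> (forall x y, adj x y -> c x != c y) -> 0 < r -> 0 < m ->
  exists N0, forall N k, N0 <= N ->
    (m * r - m + 3 * r) * (N * (N - 1)) <= 2 * m * r * k -> ex (complete_graph N) fam < k.
Proof.
move=> famH c_proper r_gt0 m_gt0.
have [NS HNS] := erdos_stone r m_gt0 (nv H).
pose N1 := NS + m + 2.
exists (m * (N1 * (N1 - 1))).+2 => N k N_big dense_k.
have pairs_big : m * (N1 * (N1 - 1)) < N * (N - 1).
  by apply: leq_trans (ltnW N_big) _; rewrite leq_pmulr; lia.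
have k_gt0 : 0 < k.
  have : 1 * 1 <= (m * r - m + 3 * r) * (N * (N - 1)) by apply: leq_mul; lia.
  lia.
suff : ex (complete_graph N) fam <= k.-1 by lia.
apply/bigmax_leqP => F /andP [F_edges /asboolP F_free].
rewrite leqNgt; apply/negP => F_large.
have {}F_large : k <= #|F| by lia.
have F_ordered : F \subset [set p : 'I_N * 'I_N | val p.1 < val p.2].
  by apply: subset_trans F_edges _; apply/subsetP => p; rewrite !inE => /andP [].
have [S [S_big S_dense]] : exists S : {set 'I_N}, N1 < #|S| /\ min_degree_dense (fadj F) m r S.
  apply: (@min_degree_dense_subset _ (fadj F) m r (@fadj_sym _ F) (fadj_irr F_ordered)
            r_gt0 N1).
- by rewrite /N1; lia.
- by rewrite card_ord.
- rewrite card_ord deg_sum_fadj //; apply: leq_trans dense_k _.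
  have -> : 2 * m * r * k = m * r * (2 * k) by lia.
  by rewrite leq_mul2l leq_mul2l F_large !orbT.
have [|A hA] := HNS _ (fadj F) (@fadj_sym _ F) S _ S_dense.
  by apply: leq_trans _ (ltnW S_big); rewrite /N1 -addnA leq_addr.
exact: F_free famH (contains_of_complete_parts F_ordered c_proper hA).
Qed.

Lemma exists_max_pairs (D M : nat) : 0 < D ->
  exists N, D * (N * (N - 1)) <= M < D * (N.+1 * N).
Proof.
move=> D_gt0; pose P N := D * (N * (N - 1)) <= M.
have P0 : exists N, P N by exists 0; rewrite /P muln0.
have P_ub N : P N -> N <= M.+1.
  rewrite /P => PN; have : N - 1 <= D * (N * (N - 1)).
    by apply: leq_trans (leq_pmull _ D_gt0); case: N {PN} => //= n; rewrite subn1 leq_pmull.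
  lia.
have [N PN N_max] := ex_maxnP P0 P_ub.
exists N; apply/andP; split=> //; rewrite ltnNge; apply/negP => PS.
by have := N_max N.+1; rewrite /P subn1 /= ltnn => /(_ PS).
Qed.

(* With [r = a + 1], [D = m a + 3 r] and [c = p r - a], the choice
   [m >= 6 p r^2] gives [a p m r >= c D + 3 p r^2]; the surplus [3 p r^2]
   absorbs the [2 N] lost from [(N + 1) N] to [N (N - 1)]. *)
Lemma edges_of_max_pairs a p m k N : 0 < a -> 0 < p -> 6 * p * (a.+1 * a.+1) <= m ->
  m * a + 3 * a.+1 < N -> 2 * m * a.+1 * k < (m * a + 3 * a.+1) * (N.+1 * N) ->
  2 * (p * a.+1 * k) <= a * p * (N * (N - 1)) + 2 * (a * k).
Proof.
move=> a_gt0 p_gt0 m_big N_big k_small.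
move Er : a.+1 => r in m_big N_big k_small *; have r_gt0 : 0 < r by rewrite -Er.
set D := m * a + 3 * r in N_big k_small; set Q := N * (N - 1).
have pairsS : N.+1 * N = Q + 2 * N by rewrite /Q; case: (N) => //= n; rewrite subn1 /=; lia.
rewrite pairsS in k_small.
have [c Ec] : exists c, c + a = p * r.
  exists (p * r - a); rewrite subnK // -Er mulnS.
  exact: leq_trans (leq_pmull a p_gt0) (leq_addl _ _).
have cD : c * D + 3 * p * r * r <= a * p * m * r.
  have E1 : (c + a) * D = p * r * D by rewrite Ec.
  have : m <= a * a * m by rewrite leq_pmull ?muln_gt0 ?a_gt0.
  rewrite /D -Er in E1 *; lia.
have m_gt0 : 0 < m by apply: leq_trans m_big; rewrite !muln_gt0 p_gt0 r_gt0.
have hX : c * (2 * m * r * k) <= c * (D * (Q + 2 * N)) by rewrite leq_mul2l ltnW ?orbT.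
have hQ : 3 * p * r * r * (N * D) <= 3 * p * r * r * Q.
  by rewrite leq_mul2l /Q leq_mul2l; apply/orP; right; apply/orP; right; lia.
have hc : c * (D * N) <= p * r * (D * N) by rewrite leq_mul2r -Ec leq_addr orbT.
have hr : p * r * (D * N) <= p * r * r * (D * N).
  by rewrite leq_mul2r leq_pmulr ?orbT.
have hcDQ := leq_mul cD (leqnn Q).
have E2 : (c + a) * (2 * m * r * k) = p * r * (2 * m * r * k) by rewrite Ec.
rewrite -(@leq_pmul2l (m * r)) ?muln_gt0 ?m_gt0 //; lia.
Qed.

Lemma nedges_lower_bound fam a (H : sgraph) (c : 'I_(nv H) -> 'I_a.+2) p :
  0 < a -> 0 < p -> fam H -> (forall x y, adj x y -> c x != c y) ->
  exists K, forall k, K <= k -> exists G : sgraph,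
    no_isolated G /\ ex G fam < k /\ p * a.+1 * k <= a * p * nedges G + a * k.
Proof.
move=> a_gt0 p_gt0 famH c_proper.
pose m := 6 * p * (a.+1 * a.+1).
have m_gt0 : 0 < m by rewrite /m !muln_gt0 p_gt0.
have [N0 HN0] := ex_complete_graph_lt famH c_proper (ltn0Sn a) m_gt0.
pose D := m * a.+1 - m + 3 * a.+1.
have ED : D = m * a + 3 * a.+1 by rewrite /D mulnS addKn.
pose N1 := maxn N0 D.+1.
exists (D * (N1 * N1)) => k k_big.
have [|N /andP [N_pairs N_max]] := exists_max_pairs (2 * m * a.+1 * k) (_ : 0 < D).
  by rewrite ED; lia.
have N_big : N1 <= N.
  rewrite leqNgt; apply/negP => NN1.
  have : D * (N.+1 * N) <= D * (N1 * N1) by rewrite leq_mul2l leq_mul ?orbT // ltnW.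
  have : k <= 2 * m * a.+1 * k by rewrite leq_pmull // !muln_gt0 p_gt0.
  lia.
have N_gtD : D < N by apply: leq_trans N_big; rewrite leq_maxr.
exists (complete_graph N); split.
  by apply: complete_graph_no_isolated; rewrite ED in N_gtD; lia.
split; first by apply: HN0 N_pairs; apply: leq_trans N_big; rewrite leq_maxl.
rewrite ED in N_gtD N_max.
have := edges_of_max_pairs a_gt0 p_gt0 (leqnn m) N_gtD N_max.
rewrite -nedges_complete_graph; lia.
Qed.

Local Open Scope ring_scope.

Lemma exists_inv_nat_le (eps : rat) :
  0 < eps -> exists p : nat, (0 < p)%N /\ p%:R^-1 <= eps.
Proof.
move=> eps_gt0; have inv_gt0 : 0 < eps^-1 by rewrite invr_gt0.
have p_big : eps^-1 < (Num.bound eps^-1)%:R := archi_boundP (ltW inv_gt0).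
set p := Num.bound eps^-1 in p_big *.
have p_gt0 : (0 < p)%N by rewrite -(ltr0n rat); apply: lt_trans p_big.
exists p; split=> //.
by rewrite -[eps]invrK lef_pV2 ?posrE ?ltr0n ?ltW.
Qed.

Lemma upper_bound_rat (a e x k : nat) (eps : rat) :
  (0 < a)%N -> (a * e <= a.+1 * x)%N -> (x < k)%N -> 0 <= eps ->
  e%:R <= (1 + 1 / a%:R + eps) * k%:R.
Proof.
move=> a_gt0 e_le x_lt eps_ge0.
have : (a * e <= a.+1 * k)%N by apply: leq_trans e_le _; rewrite leq_mul2l ltnW ?orbT.
rewrite -(ler_nat rat) !natrM => h.
rewrite -(ler_pM2l (_ : 0 < a%:R)) ?ltr0n //; apply: le_trans h _.
have -> : a%:R * ((1 + 1 / a%:R + eps) * k%:R) =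
    a.+1%:R * k%:R + a%:R * eps * k%:R :> rat.
  by rewrite -addn1 natrD; field; rewrite pnatr_eq0 -lt0n.
by rewrite lerDl !mulr_ge0 ?ler0n.
Qed.

Lemma lower_bound_rat (a p e k : nat) (eps : rat) :
  (0 < a)%N -> (0 < p)%N -> p%:R^-1 <= eps -> (p * a.+1 * k <= a * p * e + a * k)%N ->
  (1 + 1 / a%:R - eps) * k%:R <= e%:R.
Proof.
move=> a_gt0 p_gt0 p_eps; rewrite -(ler_nat rat) !natrD !natrM => h.
apply: le_trans (_ : (1 + 1 / a%:R - p%:R^-1) * k%:R <= _).
  by rewrite ler_wpM2r ?ler0n // lerD2l lerN2.
rewrite -(ler_pM2l (_ : 0 < a%:R * p%:R)) ?mulr_gt0 ?ltr0n //.
rewrite -(lerD2r (a%:R * k%:R)); apply: le_trans h; rewrite le_eqVlt; apply/orP; left.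
by apply/eqP; rewrite -addn1 natrD; field; rewrite !pnatr_eq0 -!lt0n a_gt0 p_gt0.
Qed.

Theorem theorem1p1 (fam : sgraph -> Prop) (rho : nat) :
  (forall H, fam H -> no_isolated H) ->
  is_min_chi fam rho -> (3 <= rho)%N ->
  forall eps : rat, 0 < eps ->
  exists K : nat, forall k : nat, (K <= k)%N ->
    (forall G : sgraph, no_isolated G -> (ex G fam < k)%N ->
       (nedges G)%:R <= (1 + 1 / (rho - 2)%N%:R + eps) * k%:R) /\
    (exists G : sgraph, no_isolated G /\ (ex G fam < k)%N /\
       (1 + 1 / (rho - 2)%N%:R - eps) * k%:R <= (nedges G)%:R).
Proof.
move=> _ chi_min rho_ge3 eps eps_gt0.
have [a Ea] : exists a, rho = a.+2 by exists rho.-2; lia.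
subst rho; have a_gt0 : (0 < a)%N by lia.
have -> : (a.+2 - 2)%N = a by lia.
have [p [p_gt0 p_eps]] := exists_inv_nat_le eps_gt0.
have [[H [famH [[c c_proper] _]]] _] := chi_min.
have [K HK] := nedges_lower_bound a_gt0 p_gt0 famH c_proper.
exists K => k k_big; split=> [G _ G_ex | ].
  apply: upper_bound_rat a_gt0 _ G_ex (ltW eps_gt0).
  by have := nedges_le_ex G chi_min rho_ge3; rewrite !subSS !subn0.
have [G [G_noiso [G_ex G_edges]]] := HK k k_big.
by exists G; do !split=> //; apply: lower_bound_rat a_gt0 p_gt0 p_eps G_edges.
Qed.
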